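(* Let $\mathcal F=(F,\rightarrowtail)$ be an argumentation framework with grounded extension $\mathcal G$. If $A\subseteq F$ is tenable, then $A\cup\mathcal G$ is conflict-free.
   Context: An argumentation framework (AF) $\mathcal F=(F,\rightarrowtail)$ consists of a (possibly infinite) set $F$ of arguments and a binary attack relation $\rightarrowtail\subseteq F\times F$. An argument $a$ attacks a set $B$ if $a\rightarrowtail b$ for some $b\in B$; a set $A$ attacks $x$ if some $a\in A$ attacks $x$. $A^+=\{x\in F:\exists a\in A,\ a\rightarrowtail x\}$. A set is conflict-free if none of its elements attacks one of its elements. For $A,B\subseteq F$, $A$ is as cogent as $B$, written $A\succeq B$, if $A$ is conflict-free and every $b\in B$ that attacks $A$ belongs to $A^+$. We write $B\succ A$ if $B\succeq A$ and not $A\succeq B$. Grounded extension: a set $S$ defends an argument $a$ if every attacker of $a$ is attacked by some element of $S$. Put $\mathcal G_0=\emptyset$, $\mathcal G_{\alpha+1}=\{a\in F: \mathcal G_\alpha \text{ defends } a\}$ for ordinals $\alpha$, and $\mathcal G_\lambda=\bigcup_{\alpha<\lambda}\mathcal G_\alpha$ for limit ordinals $\lambda$. There is an ordinal $\beta$ with $\mathcal G_\gamma=\mathcal G_\beta$ for all $\gamma\ge\beta$; the grounded extension is $\mathcal G=\mathcal G_\beta$. Tenability game: a tenability dispute on $\mathcal F$ is a finite sequence $(X_0,\dots,X_n)$ of subsets of $F$, where even-indexed sets are moves of the Proponent (Pro) and odd-indexed sets are moves of the Opponent (Opp), such that (1) each $X_i$ is conflict-free; (2) $X_i\subseteq X_{i+2}$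 whenever both are defined; (3) $X_1$ and each $X_{i+2}\setminus X_i$ are finite; (4) $X_{i+1}\succeq X_i$ for every $i$; (5) every Opp move satisfies $X_{2k+1}\succ X_{2k}$. Play starts with $X_0=A$ and players alternately extend the sequence so that it remains a tenability dispute. A dispute is concluded if it has no legal extension; a concluded dispute is won by the player who made its last move. A strategy for Pro assigns to each dispute ending with an Opp move a legal Pro reply; it is winning if every concluded dispute starting with $X_0=A$ in which Pro follows it is won by Pro (infinite plays count as wins for Pro). $A$ is tenable if Pro has a winning strategy starting with $X_0=A$. *)

From Stdlib Require Import List Arith.
Import ListNotations.

Set Implicit Arguments.

Section AF.
(* An argumentation framework: the type [Arg] is the set F of arguments,
   [att x y] means x attacks y. *)
Variables (Arg : Type) (att : Arg -> Arg -> Prop).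

Definition aset := Arg -> Prop.

Definition conflict_free (A : aset) : Prop :=
  forall a b, A a -> A b -> ~ att a b.

Definition attacks_set (a : Arg) (B : aset) : Prop := exists b, B b /\ att a b.

Definition plus (A : aset) : aset := fun x => exists a, A a /\ att a x.

Definition cogent (A B : aset) : Prop :=
  conflict_free A /\ forall b, B b -> attacks_set b A -> plus A b.

Definition strictly_cogent (B A : aset) : Prop := cogent B A /\ ~ cogent A B.

Definition finite_set (A : aset) : Prop :=
  exists l : list Arg, forall x, A x -> In x l.

Definition setminus (A B : aset) : aset := fun x => A x /\ ~ B x.

Definition subset (A B : aset) : Prop := forall x, A x -> B x.

Definition defends (S : aset) (a : Arg) : Prop :=
  forall b, att b a -> exists c, S c /\ att c b.

(* Grounded extension: union of the transfinite stages G_alpha.  An argument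
   belongs to some stage G_{alpha+1} iff it is defended by an earlier stage;
   the inductive predicate below is exactly this union (the height of a
   derivation is the ordinal stage). *)
Inductive grounded : Arg -> Prop :=
  grounded_intro : forall a,
    (forall b, att b a -> exists c, grounded c /\ att c b) -> grounded a.

(* Disputes: finite non-empty sequences X_0 ... X_n, represented as lists;
   X i := nth i d (empty set). Even indices: Pro, odd indices: Opp. *)
Definition X (d : list aset) (i : nat) : aset := nth i d (fun _ => False).

Definition is_dispute (d : list aset) : Prop :=
  let L := length d in
  1 <= L /\
  (forall i, i < L -> conflict_free (X d i)) /\
  (forall i, i + 2 < L -> subset (X d i) (X d (i + 2))) /\
  (2 <= L -> finite_set (X d 1)) /\
  (forall i, i + 2 < L -> finite_set (setminus (X d (i + 2)) (X d i))) /\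
  (forall i, i + 1 < L -> cogent (X d (i + 1)) (X d i)) /\
  (forall k, 2 * k + 1 < L -> strictly_cogent (X d (2 * k + 1)) (X d (2 * k))).

Definition concluded (d : list aset) : Prop :=
  is_dispute d /\ ~ exists Y, is_dispute (d ++ [Y]).

(* Won by Pro: last move X_n has even index n, i.e. length odd. *)
Definition won_by_pro (d : list aset) : Prop := Nat.Odd (length d).

Definition strategy := list aset -> aset.

Definition follows (sigma : strategy) (d : list aset) : Prop :=
  forall k, 1 <= k -> 2 * k < length d -> X d (2 * k) = sigma (firstn (2 * k) d).

Definition is_strategy_from (A : aset) (sigma : strategy) : Prop :=
  forall d, is_dispute d -> X d 0 = A -> follows sigma d ->
    Nat.Even (length d) -> is_dispute (d ++ [sigma d]).

Definition winning_from (A : aset) (sigma : strategy) : Prop :=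
  is_strategy_from A sigma /\
  forall d, concluded d -> X d 0 = A -> follows sigma d -> won_by_pro d.

Definition tenable (A : aset) : Prop :=
  is_dispute [A] /\ exists sigma, winning_from A sigma.

End AF.

From Stdlib Require Import List Arith Lia Classical.
Import ListNotations.

(* Call an argument safe (for A) when it lies in the grounded extension of the
   framework from which every argument attacked by A has been deleted.  If some
   grounded argument attacks A, so does some safe argument.  Against a safe
   attacker x of a Pro move P the Opponent can reply with a finite
   conflict-free set of safe arguments containing x that defends itself
   against P: finiteness holds because, apart from A (which attacks no safe
   argument), P only grew by finitely many arguments.  This move is strictly
   more cogent than P unless P already counter-attacks x, so every legal Pro
   reply must counter-attack x.  Each counter-attacker is in turn attacked by a
   safe argument of lower rank, and well-founded induction on safety refutes
   the existence of a safe attacker of a Pro move, in particular of A. *)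

Section Grounded.

Variables (Arg : Type) (att : Arg -> Arg -> Prop).

Lemma grounded_strong_ind (Q : Arg -> Prop) :
  (forall x, grounded att x ->
     (forall b, att b x -> exists c, grounded att c /\ Q c /\ att c b) -> Q x) ->
  forall x, grounded att x -> Q x.
Proof.
  intros H. fix F 2. intros x Gx. apply H; [exact Gx|].
  destruct Gx as [x Hdef]. intros b Hb.
  destruct (Hdef b Hb) as [c [Gc Hcb]]. exists c. split; [|split]; auto.
Qed.

Lemma grounded_conflict_free : conflict_free att (grounded att).
Proof.
  intros a b Ga Gb. revert b Gb a Ga.
  apply (grounded_strong_ind (fun b => forall a, grounded att a -> ~ att a b)).
  intros b _ IH a Ga Hab.
  destruct (IH a Hab) as [c [_ [Hc Hca]]].
  destruct Ga as [a Hdef].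
  destruct (Hdef c Hca) as [c' [Gc' Hc'c]].
  exact (Hc c' Gc' Hc'c).
Qed.

Definition last_move (d : list (aset Arg)) : aset Arg := X d (length d - 1).

Lemma X_app_l (d e : list (aset Arg)) i : i < length d -> X (d ++ e) i = X d i.
Proof. intros Hi. unfold X. apply app_nth1, Hi. Qed.

Lemma X_snoc_last (d : list (aset Arg)) y : X (d ++ [y]) (length d) = y.
Proof. unfold X. rewrite app_nth2, Nat.sub_diag by lia. reflexivity. Qed.

Lemma follows_snoc (sigma : strategy Arg) (d : list (aset Arg)) y :
  follows sigma d -> (Nat.Even (length d) -> y = sigma d) -> follows sigma (d ++ [y]).
Proof.
  intros Hf Hy k Hk Hlt. rewrite length_app in Hlt. simpl in Hlt.
  destruct (Nat.eq_dec (2 * k) (length d)) as [E|E].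
  - rewrite E, X_snoc_last, firstn_app, firstn_all, Nat.sub_diag, app_nil_r.
    apply Hy. exists k. lia.
  - rewrite X_app_l, Hf by lia. rewrite firstn_app.
    replace (2 * k - length d) with 0 by lia. simpl. rewrite app_nil_r. reflexivity.
Qed.

Lemma is_dispute_snoc (d : list (aset Arg)) Y :
  is_dispute att d -> conflict_free att Y ->
  (length d = 1 -> finite_set Y) ->
  (2 <= length d ->
     subset (X d (length d - 2)) Y /\ finite_set (setminus Y (X d (length d - 2)))) ->
  cogent att Y (last_move d) ->
  (Nat.Odd (length d) -> strictly_cogent att Y (last_move d)) ->
  is_dispute att (d ++ [Y]).
Proof.
  intros (H1 & Hcf & Hsub & Hfin1 & Hfin & Hcog & Hstr) HcfY HY1 HY2 HcogY HstrY.
  unfold is_dispute. cbv zeta. rewrite length_app. change (length [Y]) with 1.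
  split; [lia|]. split; [|split; [|split; [|split; [|split]]]].
  - intros i Hi. destruct (Nat.eq_dec i (length d)) as [->|E].
    + rewrite X_snoc_last. exact HcfY.
    + rewrite X_app_l by lia. apply Hcf. lia.
  - intros i Hi. rewrite X_app_l by lia. destruct (Nat.eq_dec (i + 2) (length d)) as [E|E].
    + rewrite E, X_snoc_last. replace i with (length d - 2) by lia. apply HY2. lia.
    + rewrite X_app_l by lia. apply Hsub. lia.
  - intros Hl. destruct (Nat.eq_dec (length d) 1) as [E|E].
    + rewrite <- E, X_snoc_last. auto.
    + rewrite X_app_l by lia. apply Hfin1. lia.
  - intros i Hi. rewrite (X_app_l d [Y] i) by lia.
    destruct (Nat.eq_dec (i + 2) (length d)) as [E|E].
    + rewrite E, X_snoc_last. replace i with (length d - 2) by lia. apply HY2. lia.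
    + rewrite X_app_l by lia. apply Hfin. lia.
  - intros i Hi. rewrite (X_app_l d [Y] i) by lia. destruct (Nat.eq_dec (i + 1) (length d)) as [E|E].
    + rewrite E, X_snoc_last. replace i with (length d - 1) by lia. exact HcogY.
    + rewrite X_app_l by lia. apply Hcog. lia.
  - intros k Hk. rewrite (X_app_l d [Y] (2 * k)) by lia. destruct (Nat.eq_dec (2 * k + 1) (length d)) as [E|E].
    + rewrite E, X_snoc_last. replace (2 * k) with (length d - 1) by lia.
      apply HstrY. exists k. lia.
    + rewrite X_app_l by lia. apply Hstr. lia.
Qed.

Section Safe.

Variable A : aset Arg.

Inductive safe : Arg -> Prop :=
  safe_intro x : (forall a, A a -> ~ att a x) ->
    (forall b, att b x -> exists c, safe c /\ att c b) -> safe x.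

Lemma safe_strong_ind (Q : Arg -> Prop) :
  (forall x, safe x -> (forall b, att b x -> exists c, safe c /\ Q c /\ att c b) -> Q x) ->
  forall x, safe x -> Q x.
Proof.
  intros H. fix F 2. intros x Sx. apply H; [exact Sx|].
  destruct Sx as [x _ Hdef]. intros b Hb.
  destruct (Hdef b Hb) as [c [Sc Hcb]]. exists c. split; [|split]; auto.
Qed.

Lemma safe_unattacked x a : safe x -> A a -> ~ att a x.
Proof. intros [x' HA _]. exact (HA a). Qed.

Lemma safe_grounded : subset safe (grounded att).
Proof.
  intros x. revert x. apply (safe_strong_ind (grounded att)). intros x _ IH. constructor. intros b Hb.
  destruct (IH b Hb) as [c [_ [Gc Hcb]]]. eauto.
Qed.

Lemma grounded_attacker_safe g :
  grounded att g -> attacks_set att g A -> exists x, safe x /\ attacks_set att x A.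
Proof.
  intros Gg HgA. apply NNPP. intros Hnone.
  assert (Hsafe : subset (grounded att) safe).
  { intros x. revert x. apply (grounded_strong_ind safe). intros x _ IH. constructor.
    - intros a Aa Hax. destruct (IH a Hax) as [c [_ [Sc Hca]]].
      apply Hnone. exists c. split; [exact Sc|]. exists a. auto.
    - intros b Hb. destruct (IH b Hb) as [c [_ [Sc Hcb]]]. eauto. }
  apply Hnone. exists g. split; auto.
Qed.

Definition defended_safe_list (P : aset Arg) (L : list Arg) : Prop :=
  (forall y, In y L -> safe y) /\
  (forall y, In y L -> forall b, P b -> att b y -> exists c, In c L /\ att c b).

Lemma defended_safe_list_nil P : defended_safe_list P [].
Proof. split; intros y []. Qed.

Lemma defended_safe_list_app P L1 L2 :
  defended_safe_list P L1 -> defended_safe_list P L2 -> defended_safe_list P (L1 ++ L2).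
Proof.
  intros [S1 D1] [S2 D2]. split.
  - intros y Hy. apply in_app_or in Hy as [Hy|Hy]; auto.
  - intros y Hy b Pb Hby. apply in_app_or in Hy as [Hy|Hy].
    + destruct (D1 y Hy b Pb Hby) as [c [Hc Hcb]]. exists c. split; auto using in_or_app.
    + destruct (D2 y Hy b Pb Hby) as [c [Hc Hcb]]. exists c. split; auto using in_or_app.
Qed.

Section Closure.

Variables (P : aset Arg) (N : list Arg).
Hypothesis P_finite_over_A : forall y, P y -> A y \/ In y N.

Lemma safe_in_defended_list x : safe x -> exists L, In x L /\ defended_safe_list P L.
Proof.
  revert x. apply safe_strong_ind. intros x Sx IH.
  assert (Hdefs : forall K : list Arg, exists L, defended_safe_list P L /\
            forall b, In b K -> att b x -> exists c, In c L /\ att c b).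
  { induction K as [|b K [L [HL HK]]].
    - exists []. split; [apply defended_safe_list_nil | intros b []].
    - destruct (classic (att b x)) as [Hbx|Hbx].
      + destruct (IH b Hbx) as [c [_ [[Lc [Hc HLc]] Hcb]]].
        exists (Lc ++ L). split; [apply defended_safe_list_app; auto|].
        intros b' [<-|Hb'] Hb'x.
        * exists c. split; auto using in_or_app.
        * destruct (HK b' Hb' Hb'x) as [c' [Hc' Hc'b']]. exists c'. split; auto using in_or_app.
      + exists L. split; auto. intros b' [<-|Hb'] Hb'x; [contradiction | auto]. }
  destruct (Hdefs N) as [L [[SL DL] HN]].
  exists (x :: L). split; [left; reflexivity|]. split.
  - intros y [<-|Hy]; auto.
  - intros y [<-|Hy] b Pb Hby.
    + destruct (P_finite_over_A b Pb) as [Ab|Nb].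
      * exfalso. exact (safe_unattacked x b Sx Ab Hby).
      * destruct (HN b Nb Hby) as [c [Hc Hcb]]. exists c. split; [right|]; auto.
    + destruct (DL y Hy b Pb Hby) as [c [Hc Hcb]]. exists c. split; [right|]; auto.
Qed.

Lemma defended_safe_list_extend M :
  (forall y, In y M -> safe y) -> exists L, incl M L /\ defended_safe_list P L.
Proof.
  induction M as [|m M IH]; intros HM.
  - exists []. split; [apply incl_nil_l | apply defended_safe_list_nil].
  - destruct IH as [L [HML HL]]; [intros y Hy; apply HM; right; exact Hy|].
    destruct (safe_in_defended_list m (HM m (or_introl eq_refl))) as [Lm [Hm HLm]].
    exists (Lm ++ L). split; [|apply defended_safe_list_app; auto].
    intros y [<-|Hy]; apply in_or_app; auto.
Qed.

End Closure.

Section Strategy.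

Variable sigma : strategy Arg.
Hypothesis sigma_strategy : is_strategy_from att A sigma.

(* The invariant of the positions reached when the Opponent plays as in
   [opp_counter_move] and Pro follows [sigma]. *)
Definition pro_position (d : list (aset Arg)) : Prop :=
  is_dispute att d /\ X d 0 = A /\ follows sigma d /\ Nat.Odd (length d) /\
  (exists N, forall y, last_move d y -> A y \/ In y N) /\
  (exists Lo, (forall y, In y Lo -> safe y) /\
     (3 <= length d -> subset (X d (length d - 2)) (fun y => In y Lo))).

Lemma pro_position_start : is_dispute att [A] -> pro_position [A].
Proof.
  intros H1. split; [exact H1|]. split; [reflexivity|]. split.
  { intros k Hk Hlt. simpl in Hlt. lia. }
  split; [exists 0; reflexivity|]. split.
  - exists []. intros y Hy. left. exact Hy.
  - exists []. split; [intros y []| simpl; lia].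
Qed.

Lemma opp_counter_move (d : list (aset Arg)) x :
  pro_position d -> safe x -> attacks_set att x (last_move d) ->
  (forall e, last_move d e -> ~ att e x) ->
  exists L, In x L /\ (forall y, In y L -> safe y) /\ is_dispute att (d ++ [fun y => In y L]).
Proof.
  intros (Hd & _ & _ & Hodd & [N HN] & [Lo [SLo HLo]]) Sx Hx Hnone.
  destruct (defended_safe_list_extend (last_move d) N HN (x :: Lo)) as [L [HxL [SL DL]]].
  { intros y [<-|Hy]; auto. }
  assert (HxL' : In x L) by (apply HxL; left; reflexivity).
  assert (Hcf : conflict_free att (fun y => In y L)).
  { intros a b Ha Hb. apply grounded_conflict_free; apply safe_grounded; auto. }
  assert (Hcog : cogent att (fun y => In y L) (last_move d)).
  { split; [exact Hcf|]. intros b Pb [o [Ho Hbo]].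
    destruct (DL o Ho b Pb Hbo) as [c [Hc Hcb]]. exists c. auto. }
  exists L. split; [exact HxL'|]. split; [exact SL|].
  apply is_dispute_snoc; auto.
  - intros _. exists L. auto.
  - intros H2. split.
    + intros y Hy. apply HxL. right. apply HLo; [destruct Hodd; lia | exact Hy].
    + exists L. intros y [Hy _]. exact Hy.
  - intros _. split; [exact Hcog|]. intros [_ Hback].
    destruct Hx as [p [Pp Hxp]].
    destruct (Hback x HxL' (ex_intro _ p (conj Pp Hxp))) as [e [Pe Hex]].
    exact (Hnone e Pe Hex).
Qed.

Lemma pro_reply_position (d : list (aset Arg)) L :
  let O := fun y => In y L in
  let d' := (d ++ [O]) ++ [sigma (d ++ [O])] in
  pro_position d -> (forall y, In y L -> safe y) -> is_dispute att (d ++ [O]) ->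
  pro_position d' /\ cogent att (last_move d') O /\ subset (last_move d) (last_move d').
Proof.
  intros O d' (Hd & H0 & Hf & Hodd & [N HN] & _) SL HdO.
  assert (Hl : length d' = length d + 2).
  { unfold d'. rewrite !length_app. simpl. lia. }
  assert (Hd' : is_dispute att d').
  { apply sigma_strategy; [exact HdO | rewrite X_app_l by (destruct Hodd; lia); exact H0 | |].
    - apply follows_snoc; [exact Hf|]. intros Hev. exfalso.
      apply (Nat.Even_Odd_False (length d)); auto.
    - rewrite length_app. destruct Hodd as [m Hm]. exists (m + 1). simpl. lia. }
  assert (XP' : last_move d' = sigma (d ++ [O])).
  { unfold last_move. rewrite Hl. replace (length d + 2 - 1) with (length (d ++ [O]))
      by (rewrite length_app; simpl; lia). apply X_snoc_last. }
  assert (XO : X d' (length d) = O).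
  { unfold d'. rewrite X_app_l by (rewrite length_app; simpl; lia). apply X_snoc_last. }
  assert (XP : X d' (length d - 1) = last_move d).
  { unfold d'. rewrite !X_app_l by (try rewrite length_app; simpl; destruct Hodd; lia).
    reflexivity. }
  pose proof Hd' as (_ & _ & Hsub & _ & Hfin & Hcog & _).
  assert (Hcog' : cogent att (last_move d') O).
  { rewrite <- XO. unfold last_move. rewrite Hl.
    replace (length d + 2 - 1) with (length d + 1) by lia. apply Hcog. lia. }
  assert (Hgrow : subset (last_move d) (last_move d') /\
                  finite_set (setminus (last_move d') (last_move d))).
  { rewrite <- XP. unfold last_move. rewrite Hl.
    replace (length d + 2 - 1) with (length d - 1 + 2) by (destruct Hodd; lia).
    split; [apply Hsub | apply Hfin]; destruct Hodd; lia. }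
  destruct Hgrow as [Hgrow [N' HN']].
  split; [|split; assumption].
  split; [exact Hd'|]. split.
  { unfold d'. rewrite !X_app_l by (try rewrite length_app; simpl; destruct Hodd; lia). exact H0. }
  split.
  { apply follows_snoc; [|reflexivity]. apply follows_snoc; [exact Hf|].
    intros Hev. exfalso. apply (Nat.Even_Odd_False (length d)); auto. }
  split; [rewrite Hl; destruct Hodd as [m Hm]; exists (m + 1); lia|].
  split.
  - exists (N ++ N'). intros y Hy. destruct (classic (last_move d y)) as [Py|Py].
    + destruct (HN y Py); [left | right; apply in_or_app]; auto.
    + right. apply in_or_app. right. apply HN'. split; assumption.
  - exists L. split; [exact SL|]. intros _. rewrite Hl.
    replace (length d + 2 - 2) with (length d) by lia. rewrite XO. intros y Hy. exact Hy.
Qed.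

Lemma safe_attacker_counterattacked (d : list (aset Arg)) x :
  pro_position d -> safe x -> attacks_set att x (last_move d) ->
  exists d', pro_position d' /\ exists e, last_move d' e /\ att e x.
Proof.
  intros Hd Sx Hx.
  destruct (classic (exists e, last_move d e /\ att e x)) as [He|Hnone]; [eauto|].
  destruct (opp_counter_move d x Hd Sx Hx) as [L [HxL [SL HdO]]].
  { intros e Pe Hex. apply Hnone. eauto. }
  destruct (pro_reply_position d L Hd SL HdO) as [Hd' [[_ Hcog] Hgrow]].
  eexists. split; [exact Hd'|].
  destruct Hx as [p [Pp Hxp]].
  apply (Hcog x HxL). exists p. auto.
Qed.

Lemma safe_not_attacks_pro x :
  safe x -> forall d, pro_position d -> ~ attacks_set att x (last_move d).
Proof.
  revert x.
  apply (safe_strong_ind (fun x => forall d, pro_position d -> ~ attacks_set att x (last_move d))).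
  intros x Sx IH d Hd Hx.
  destruct (safe_attacker_counterattacked d x Hd Sx Hx) as [d' [Hd' [e [He Hex]]]].
  destruct (IH e Hex) as [c [_ [Hc Hce]]].
  exact (Hc d' Hd' (ex_intro _ e (conj He Hce))).
Qed.

End Strategy.

Lemma tenable_not_attacked_by_grounded :
  tenable att A -> forall g, grounded att g -> ~ attacks_set att g A.
Proof.
  intros [H1 [sigma [Hs _]]] g Gg HgA.
  destruct (grounded_attacker_safe g Gg HgA) as [x [Sx HxA]].
  exact (safe_not_attacks_pro sigma Hs x Sx [A] (pro_position_start sigma H1) HxA).
Qed.

End Safe.

End Grounded.

Theorem mainTheorem4 (Arg : Type) (att : Arg -> Arg -> Prop) (A : Arg -> Prop) :
  tenable att A ->
  conflict_free att (fun x => A x \/ grounded att x).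
Proof.
  intros HA.
  pose proof (tenable_not_attacked_by_grounded _ _ _ HA) as HG.
  destruct HA as [[_ [HcfA _]] _].
  intros a b [Aa|Ga] [Ab|Gb] Hab.
  - exact (HcfA 0 ltac:(simpl; lia) a b Aa Ab Hab).
  - destruct Gb as [b Hdef]. destruct (Hdef a Hab) as [c [Gc Hca]].
    exact (HG c Gc (ex_intro _ a (conj Aa Hca))).
  - exact (HG a Ga (ex_intro _ b (conj Ab Hab))).
  - exact (grounded_conflict_free _ _ a b Ga Gb Hab).
Qed.
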